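(* Let $R_c,H,\alpha_L,\alpha_N,B,C>0$ and $0<\delta<1$. For $\lambda>0$ define, with $P_L(r_0)=\frac{1}{1+C\exp(-B(\arctan(H/r_0)-C))}$, $P_N=1-P_L$, $A_s(r_0)=(\delta(H^2+r_0^2)^{\alpha_s/2})^{1/\alpha_N}$, $B_s(r_0)=(\frac1\delta(H^2+r_0^2)^{\alpha_s/2})^{1/\alpha_N}$ ($s\in\{L,N\}$), the area fractions $\bar{C}_{\mathcal{A}_1}=\frac{2}{R_c^2}\sum_{s}\int_0^{R_c}P_s(r_0)F_{r_1|r_0}(A_s(r_0))r_0\,dr_0$ and $\bar{C}_{\mathcal{A}_3}=\frac{2}{R_c^2}\sum_{s}\int_0^{R_c}P_s(r_0)(1-F_{r_1|r_0}(B_s(r_0)))r_0\,dr_0$, where $F_{r_1|r_0}$ depends on $\lambda$ as described in the context. Then $\bar{C}_{\mathcal{A}_1}$ increases with $\lambda$ and $\bar{C}_{\mathcal{A}_3}$ decreases with $\lambda$.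
   Context: $F_{r_1|r_0}$ is the CDF of the distance $r_1$ from $x_0=(r_0,0)$, $0\le r_0\le R_c$, to the nearest point of $\Phi\setminus\{y:\|y\|\le R_c\}$, $\Phi$ a homogeneous Poisson point process of intensity $\lambda$ on $\mathbb{R}^2$: $F_{r_1|r_0}(r)=0$ for $r\le R_c-r_0$, $=1-e^{-\lambda\zeta_2(r)}$ for $R_c-r_0<r<R_c+r_0$, where $\zeta_2(r)=\pi r^2-\theta_1R_c^2+R_c^2\sin\theta_1\cos\theta_1-\theta_2r^2+r^2\sin\theta_2\cos\theta_2$, $\theta_1=\arccos\frac{R_c^2+r_0^2-r^2}{2R_cr_0}$, $\theta_2=\arccos\frac{r_0^2+r^2-R_c^2}{2r_0r}$, and $=1-e^{-\lambda(\pi r^2-\pi R_c^2)}$ otherwise. $\bar C_{\mathcal{A}_1}$ (resp. $\bar C_{\mathcal{A}_3}$) is the expected fraction of the malfunction disc whose users are served by the nearest ground base station only (resp. the UAV only). *)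

From Stdlib Require Import Reals.
From Coquelicot Require Import Coquelicot.
Open Scope R_scope.

(* zeta_2(r) for the lens-shaped region, x0 = (r0,0), disc radius Rc *)
Definition theta1 (Rc r0 r : R) : R :=
  acos ((Rc ^ 2 + r0 ^ 2 - r ^ 2) / (2 * Rc * r0)).
Definition theta2 (Rc r0 r : R) : R :=
  acos ((r0 ^ 2 + r ^ 2 - Rc ^ 2) / (2 * r0 * r)).
Definition zeta2 (Rc r0 r : R) : R :=
  let t1 := theta1 Rc r0 r in
  let t2 := theta2 Rc r0 r in
  PI * r ^ 2 - t1 * Rc ^ 2 + Rc ^ 2 * sin t1 * cos t1
  - t2 * r ^ 2 + r ^ 2 * sin t2 * cos t2.

Definition Fr1 (lam Rc r0 r : R) : R :=
  if Rle_dec r (Rc - r0) then 0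
  else if Rlt_dec r (Rc + r0) then 1 - exp (- lam * zeta2 Rc r0 r)
  else 1 - exp (- lam * (PI * r ^ 2 - PI * Rc ^ 2)).

Definition PL (H B C r0 : R) : R :=
  1 / (1 + C * exp (- B * (atan (H / r0) - C))).
Definition PN (H B C r0 : R) : R := 1 - PL H B C r0.

Definition Athr (H alphaN delta alphas r0 : R) : R :=
  Rpower (delta * Rpower (H ^ 2 + r0 ^ 2) (alphas / 2)) (1 / alphaN).
Definition Bthr (H alphaN delta alphas r0 : R) : R :=
  Rpower (/ delta * Rpower (H ^ 2 + r0 ^ 2) (alphas / 2)) (1 / alphaN).

Definition CA1 (Rc H alphaL alphaN B C delta lam : R) : R :=
  2 / Rc ^ 2 *
  (RInt (fun r0 => PL H B C r0 * Fr1 lam Rc r0 (Athr H alphaN delta alphaL r0) * r0) 0 Rc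
 + RInt (fun r0 => PN H B C r0 * Fr1 lam Rc r0 (Athr H alphaN delta alphaN r0) * r0) 0 Rc).

Definition CA3 (Rc H alphaL alphaN B C delta lam : R) : R :=
  2 / Rc ^ 2 *
  (RInt (fun r0 => PL H B C r0 * (1 - Fr1 lam Rc r0 (Bthr H alphaN delta alphaL r0)) * r0) 0 Rc
 + RInt (fun r0 => PN H B C r0 * (1 - Fr1 lam Rc r0 (Bthr H alphaN delta alphaN r0)) * r0) 0 Rc).

(* The intensity enters both area fractions only through
   F(r) = 1 - exp (-lam * zeta(r0, r)), where zeta(r0, r) is the area of the part of the
   disc of radius r about x0 lying outside the disc of radius Rc (zeta2 in the lens regime,
   0 and pi (r^2 - Rc^2) in the other two).  Since zeta >= 0, F grows with lam pointwise,
   and integrating against the nonnegative weights P_s(r0) r0 keeps the inequality.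
   In the lens regime both circles cut the same chord, zeta2 is the difference of the two
   circular segments beyond it, and a segment with a fixed chord shrinks as the chord moves
   away from the centre.  Integrability comes from continuity of r0 |-> F(A_s(r0)), which
   needs acos to be continuous at +-1, where the three regimes meet. *)

From Stdlib Require Import Reals Rtrigo_facts Lra.
From Coquelicot Require Import Coquelicot.
Open Scope R_scope.

Lemma antitone_of_derive_nonpos (f df : R -> R) (a b : R) :
  a <= b -> (forall x : R, is_derive f x (df x)) -> (forall x, a <= x <= b -> df x <= 0) ->
  f b <= f a.
Proof.
  intros Hab Hf Hdf.
  destruct (MVT_gen f a b df) as (c & Hc & Hmvt).
  - intros x _; apply Hf.
  - intros x _; apply continuity_pt_filterlim.
    apply (ex_derive_continuous (V := R_NormedModule)).
    eexists; apply Hf.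
  - rewrite Rmin_left, Rmax_right in Hc by lra.
    assert (df c * (b - a) <= 0) by (apply Rmult_le_0_r; [apply Hdf|]; lra).
    lra.
Qed.

Lemma atan_le_id y : 0 <= y -> atan y <= y.
Proof.
  intros Hy.
  assert (Hdecr : atan y - y <= atan 0 - 0).
  { apply (antitone_of_derive_nonpos (fun t => atan t - t) (fun t => / (1 + t ^ 2) - 1));
      [lra | intros t; auto_derive; [nra | field; nra] |].
    intros t _.
    assert (/ (1 + t ^ 2) <= 1) by (rewrite <- Rinv_1; apply Rinv_le_contravar; nra).
    lra. }
  rewrite atan_0 in Hdecr; lra.
Qed.

(* Area of the segment cut off a disc by a chord of half-length [h] at signed distance [d]
   from the centre, on the side the distance is measured towards. *)
Definition segment_area (h d : R) : R :=
  (h ^ 2 + d ^ 2) * (PI / 2 - atan (d / h)) - h * d.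

Lemma segment_area_antitone h d1 d2 : 0 < h -> d1 <= d2 ->
  segment_area h d2 <= segment_area h d1.
Proof.
  intros Hh Hd.
  apply (antitone_of_derive_nonpos (segment_area h)
           (fun d => 2 * (d * (PI / 2 - atan (d / h)) - h))); [lra | |].
  - intros d; unfold segment_area; auto_derive; [lra |].
    unfold Rdiv; field; split; nra.
  - intros d _.
    enough (d * (PI / 2 - atan (d / h)) <= h) by lra.
    destruct (Rle_or_lt d 0) as [Hd0 | Hd0].
    + pose proof (atan_bound (d / h)). nra.
    + assert (Hhd : 0 < h / d) by (apply Rdiv_lt_0_compat; lra).
      replace (PI / 2 - atan (d / h)) with (atan (h / d))
        by (rewrite <- atan_inv by (apply Rdiv_lt_0_compat; lra); f_equal; field; lra).
      pose proof (atan_le_id (h / d) (Rlt_le _ _ Hhd)).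
      replace h with (d * (h / d)) at 2 by (field; lra).
      apply Rmult_le_compat_l; lra.
Qed.

Lemma segment_area_polar rho t : 0 < rho -> 0 < t < PI ->
  segment_area (rho * sin t) (rho * cos t) = rho ^ 2 * (t - sin t * cos t).
Proof.
  intros Hrho Ht.
  assert (Hsin : 0 < sin t) by (apply sin_gt_0; lra).
  assert (Hatan : atan (rho * cos t / (rho * sin t)) = PI / 2 - t).
  { rewrite <- (atan_tan (PI / 2 - t)) by lra.
    unfold tan; rewrite sin_shift, cos_shift; f_equal; field; lra. }
  assert (Hpyth : (rho * sin t) ^ 2 + (rho * cos t) ^ 2 = rho ^ 2).
  { pose proof (sin2_cos2 t) as E; unfold Rsqr in E.
    replace (rho ^ 2) with (rho ^ 2 * (sin t * sin t + cos t * cos t)) by (rewrite E; ring).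
    ring. }
  unfold segment_area; rewrite Hatan, Hpyth; ring.
Qed.

Lemma acos_ge_1 x : 1 <= x -> acos x = 0.
Proof. intros Hx; unfold acos; repeat destruct Rle_dec; lra. Qed.

Lemma acos_le_m1 x : x <= -1 -> acos x = PI.
Proof. intros Hx; unfold acos; destruct Rle_dec; lra. Qed.

Lemma Rdiv_ge_1 x y : 0 < y -> y <= x -> 1 <= x / y.
Proof. intros Hy Hx; apply Rle_div_r; lra. Qed.

Lemma Rdiv_le_m1 x y : 0 < y -> x <= - y -> x / y <= -1.
Proof. intros Hy Hx; apply Rle_div_l; lra. Qed.

Lemma Rdiv_in_m1_1 x y : 0 < y -> - y < x < y -> -1 < x / y < 1.
Proof. intros Hy Hx; split; [apply Rlt_div_r | apply Rlt_div_l]; lra. Qed.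

Lemma zeta2_inner Rc r0 r : 0 < r0 -> 0 < r -> r <= Rc - r0 -> zeta2 Rc r0 r = 0.
Proof.
  intros Hr0 Hr Hle; unfold zeta2, theta1, theta2.
  rewrite acos_ge_1, acos_le_m1 by (apply Rdiv_ge_1 || apply Rdiv_le_m1; nra).
  rewrite sin_0, sin_PI; ring.
Qed.

Lemma zeta2_outer Rc r0 r : 0 < Rc -> 0 < r0 -> Rc + r0 <= r ->
  zeta2 Rc r0 r = PI * r ^ 2 - PI * Rc ^ 2.
Proof.
  intros HRc Hr0 Hle; unfold zeta2, theta1, theta2.
  rewrite acos_le_m1, acos_ge_1 by (apply Rdiv_ge_1 || apply Rdiv_le_m1; nra).
  rewrite sin_0, sin_PI; ring.
Qed.

Lemma zeta2_lens_nonneg Rc r0 r : 0 < r0 <= Rc -> Rc - r0 < r < Rc + r0 ->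
  0 <= zeta2 Rc r0 r.
Proof.
  intros Hr0 Hr; unfold zeta2, theta1, theta2; cbv zeta.
  set (c1 := (Rc ^ 2 + r0 ^ 2 - r ^ 2) / (2 * Rc * r0)).
  set (c2 := (r0 ^ 2 + r ^ 2 - Rc ^ 2) / (2 * r0 * r)).
  assert (Hc1 : -1 < c1 < 1) by (apply Rdiv_in_m1_1; nra).
  assert (Hc2 : -1 < c2 < 1) by (apply Rdiv_in_m1_1; nra).
  set (t1 := acos c1); set (t2 := acos c2).
  assert (Ht1 : 0 < t1 < PI) by (apply acos_bound_lt; lra).
  assert (Ht2 : 0 < PI - t2 < PI)
    by (pose proof (acos_bound_lt c2 Hc2) as Hb; fold t2 in Hb; lra).
  assert (Hcos1 : cos t1 = c1) by (apply cos_acos; lra).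
  assert (Hcos2 : cos (PI - t2) = - c2) by (rewrite cos_pi_minus; f_equal; apply cos_acos; lra).
  assert (Hsin1 : 0 < sin t1) by (apply sin_gt_0; lra).
  assert (Hsin2 : 0 < sin (PI - t2)) by (apply sin_gt_0; lra).
  (* both circles cut the chord through their two intersection points *)
  assert (Hchord : r * sin (PI - t2) = Rc * sin t1).
  { assert (Hsq : (r * sin (PI - t2)) ^ 2 = (Rc * sin t1) ^ 2).
    { pose proof (sin2_cos2 t1); pose proof (sin2_cos2 (PI - t2)); unfold Rsqr in *.
      replace ((r * sin (PI - t2)) ^ 2) with (r ^ 2 * (1 - cos (PI - t2) ^ 2)) by nra.
      replace ((Rc * sin t1) ^ 2) with (Rc ^ 2 * (1 - cos t1 ^ 2)) by nra.
      rewrite Hcos1, Hcos2; unfold c1, c2; field; nra. }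
    apply Rsqr_inj; [nra | nra | rewrite !Rsqr_pow2; exact Hsq]. }
  assert (Hdist : r * cos (PI - t2) <= Rc * cos t1).
  { rewrite Hcos1, Hcos2.
    replace (Rc * c1) with (r0 - r * c2) by (unfold c1, c2; field; nra); nra. }
  pose proof (segment_area_antitone (Rc * sin t1) _ _ ltac:(nra) Hdist) as Hseg.
  rewrite <- Hchord in Hseg at 2.
  rewrite !segment_area_polar, sin_pi_minus, cos_pi_minus in Hseg by lra.
  nra.
Qed.

Lemma zeta2_nonneg Rc r0 r : 0 < r0 <= Rc -> 0 < r -> 0 <= zeta2 Rc r0 r.
Proof.
  intros Hr0 Hr.
  destruct (Rle_or_lt r (Rc - r0)) as [Hin | Hin]; [rewrite zeta2_inner; lra |].
  destruct (Rlt_or_le r (Rc + r0)) as [Hout | Hout]; [apply zeta2_lens_nonneg; lra |].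
  rewrite zeta2_outer by lra.
  assert (0 <= r ^ 2 - Rc ^ 2) by nra.
  pose proof PI_RGT_0; nra.
Qed.

Lemma Fr1_exp lam Rc r0 r : 0 < Rc -> 0 < r0 -> 0 < r ->
  Fr1 lam Rc r0 r = 1 - exp (- lam * zeta2 Rc r0 r).
Proof.
  intros HRc Hr0 Hr; unfold Fr1.
  destruct Rle_dec as [Hin | Hin].
  - rewrite zeta2_inner, Rmult_0_r, exp_0 by lra; ring.
  - destruct Rlt_dec as [Hmid | Hout]; [reflexivity |].
    rewrite zeta2_outer by lra; reflexivity.
Qed.

Lemma exp_le_exp x y : x <= y -> exp x <= exp y.
Proof. intros [Hlt | ->]; [apply Rlt_le, exp_increasing, Hlt | apply Rle_refl]. Qed.

Lemma Fr1_bounds lam Rc r0 r : 0 <= lam -> 0 < r0 <= Rc -> 0 < r ->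
  0 <= Fr1 lam Rc r0 r <= 1.
Proof.
  intros Hlam Hr0 Hr; rewrite Fr1_exp by lra.
  pose proof (zeta2_nonneg Rc r0 r Hr0 Hr).
  pose proof (exp_pos (- lam * zeta2 Rc r0 r)).
  enough (exp (- lam * zeta2 Rc r0 r) <= exp 0) by (rewrite exp_0 in *; lra).
  apply exp_le_exp; nra.
Qed.

Lemma Fr1_le_lam lam1 lam2 Rc r0 r : lam1 <= lam2 -> 0 < r0 <= Rc -> 0 < r ->
  Fr1 lam1 Rc r0 r <= Fr1 lam2 Rc r0 r.
Proof.
  intros Hlam Hr0 Hr; rewrite !Fr1_exp by lra.
  pose proof (zeta2_nonneg Rc r0 r Hr0 Hr).
  enough (exp (- lam2 * zeta2 Rc r0 r) <= exp (- lam1 * zeta2 Rc r0 r)) by lra.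
  apply exp_le_exp; nra.
Qed.

Lemma continuous_acos_pos x : 0 < x -> continuous acos x.
Proof.
  intros Hx.
  apply (continuous_ext_loc _ (fun y => atan (sqrt (1 - y ^ 2) / y))).
  - apply (locally_interval _ x 0 p_infty); [exact Hx | exact I |].
    intros y Hy _; rewrite acos_atan by exact Hy; unfold Rsqr; f_equal; f_equal; f_equal; ring.
  - apply continuous_atan_comp, (continuous_mult (fun y => sqrt (1 - y ^ 2)) (fun y => / y)).
    + apply continuous_sqrt_comp, (continuous_minus (fun _ => 1) (fun y => y ^ 2)).
      * apply continuous_const.
      * apply (ex_derive_continuous (V := R_NormedModule)); auto_derive; exact I.
    + apply continuous_Rinv; lra.
Qed.

Lemma continuous_acos x : continuous acos x.
Proof.
  destruct (Rtotal_order x 0) as [Hneg | [H0 | Hpos]].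
  - apply (continuous_ext (fun y => PI - acos (- y))).
    { intros y; change (PI - acos (- y) = acos y); rewrite acos_opp; ring. }
    apply (continuous_minus (fun _ => PI) (fun y => acos (- y))); [apply continuous_const |].
    apply (continuous_comp (fun y => - y) acos).
    + apply (continuous_opp (V := R_NormedModule) (fun y => y)), continuous_id.
    + apply continuous_acos_pos; lra.
  - subst x; apply continuity_pt_filterlim, derivable_continuous_pt, derivable_pt_acos; lra.
  - apply continuous_acos_pos, Hpos.
Qed.

Ltac decompose_continuous :=
  repeat match goal with
  | |- continuous (fun _ => _) _ => apply continuous_const
  | |- continuous (fun y => y) _ => apply continuous_id
  | |- continuous (fun y => @?f y + @?g y) _ =>
      apply (continuous_plus (V := R_NormedModule) f g)
  | |- continuous (fun y => @?f y - @?g y) _ =>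
      apply (continuous_minus (V := R_NormedModule) f g)
  | |- continuous (fun y => @?f y * @?g y) _ => apply (continuous_mult (K := R_AbsRing) f g)
  | |- continuous (fun y => @?f y / @?g y) _ =>
      apply (continuous_mult (K := R_AbsRing) f (fun y => / g y))
  | |- continuous (fun y => / @?f y) _ => apply (continuous_Rinv_comp f)
  | |- continuous (fun y => @?f y ^ ?n) _ =>
      apply (continuous_comp f (fun z => z ^ n));
      [| apply (ex_derive_continuous (V := R_NormedModule)); auto_derive; exact I]
  | |- continuous (fun y => ?F (@?f y)) _ => apply (continuous_comp f F)
  | |- continuous sin _ => apply continuous_sin
  | |- continuous cos _ => apply continuous_cos
  | |- continuous exp _ => apply continuous_exp
  | |- continuous acos _ => apply continuous_acos
  end.

Lemma continuous_zeta2_comp Rc (a : R -> R) x :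
  0 < Rc -> 0 < x -> continuous a x -> 0 < a x -> continuous (fun y => zeta2 Rc y (a y)) x.
Proof.
  intros HRc Hx Ha Hax; unfold zeta2, theta1, theta2; cbv zeta.
  decompose_continuous; try assumption; nra.
Qed.

Lemma continuous_Fr1_comp lam Rc (a : R -> R) x : 0 < Rc -> 0 < x -> continuous a x ->
  (forall y, 0 < y -> 0 < a y) -> continuous (fun y => Fr1 lam Rc y (a y)) x.
Proof.
  intros HRc Hx Ha Hapos.
  apply (continuous_ext_loc _ (fun y => 1 - exp (- lam * zeta2 Rc y (a y)))).
  - apply (locally_interval _ x 0 p_infty); [exact Hx | exact I |].
    intros y Hy _; rewrite Fr1_exp; auto.
  - decompose_continuous; apply continuous_zeta2_comp; auto.
Qed.

Lemma ex_RInt_continuous_Ioc (f : R -> R) b : 0 < b ->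
  (forall x, 0 < x <= b -> continuous f x) -> (forall x, 0 <= x <= b -> Rabs (f x) <= x) ->
  ex_RInt f 0 b.
Proof.
  intros Hb Hcont Hbound.
  (* [ex_RInt_continuous] asks for two-sided continuity at [0] *)
  apply (ex_RInt_ext (fun x => f (Rmax 0 x))).
  { intros x Hx; rewrite Rmin_left, Rmax_right in Hx by lra.
    rewrite Rmax_right by lra; reflexivity. }
  apply (ex_RInt_continuous (V := R_CompleteNormedModule)); intros z Hz.
  rewrite Rmin_left, Rmax_right in Hz by lra.
  destruct (Req_dec z 0) as [-> | Hz0].
  - assert (Hf0 : f 0 = 0)
      by (apply Rabs_eq_0, Rle_antisym; [apply Hbound; lra | apply Rabs_pos]).
    apply filterlim_locally; intros eps.
    assert (Hdelta : 0 < Rmin eps b) by (apply Rmin_glb_lt; [apply cond_pos | lra]).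
    exists (mkposreal _ Hdelta); intros y Hy.
    change (Rabs (y - 0) < Rmin eps b) in Hy.
    change (Rabs (f (Rmax 0 y) - f (Rmax 0 0)) < eps).
    rewrite Rminus_0_r in Hy; rewrite (Rmax_left 0 0), Hf0, Rminus_0_r by lra.
    assert (Hmax : 0 <= Rmax 0 y <= Rabs y)
      by (split; [apply Rmax_l | apply Rmax_lub; [apply Rabs_pos | apply Rle_abs]]).
    assert (Rabs (f (Rmax 0 y)) <= Rmax 0 y) by (apply Hbound; pose proof (Rmin_r eps b); lra).
    pose proof (Rmin_l eps b); lra.
  - apply (continuous_ext_loc _ f); [| apply Hcont; lra].
    apply (locally_interval _ z 0 p_infty); [simpl; lra | exact I |].
    intros y Hy _; rewrite Rmax_right by (simpl in Hy; lra); reflexivity.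
Qed.

Section Weighted_Fr1_integrals.

Variables (Rc : R) (P a : R -> R).
Hypothesis Rc_pos : 0 < Rc.
Hypothesis P_cont : forall x, 0 < x -> continuous P x.
Hypothesis P_range : forall x, 0 < x -> 0 <= P x <= 1.
Hypothesis a_cont : forall x, 0 < x -> continuous a x.
Hypothesis a_pos : forall x, 0 < x -> 0 < a x.

Lemma ex_RInt_weighted_Fr1 (G : R -> R) lam : 0 <= lam ->
  (forall y, continuous G y) -> (forall y, 0 <= y <= 1 -> Rabs (G y) <= 1) ->
  ex_RInt (fun x => P x * G (Fr1 lam Rc x (a x)) * x) 0 Rc.
Proof.
  intros Hlam HGc HGb.
  apply ex_RInt_continuous_Ioc; [exact Rc_pos | |].
  - intros x Hx.
    apply (continuous_mult (K := R_AbsRing) (fun y => P y * G (Fr1 lam Rc y (a y))) (fun y => y));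
      [| apply continuous_id].
    apply (continuous_mult (K := R_AbsRing)); [apply P_cont; lra |].
    apply (continuous_comp (fun y => Fr1 lam Rc y (a y)) G); [| apply HGc].
    apply continuous_Fr1_comp; [exact Rc_pos | lra | apply a_cont; lra | exact a_pos].
  - intros x [[Hx | <-] Hxb]; [| rewrite Rmult_0_r, Rabs_R0; lra].
    assert (HF : 0 <= Fr1 lam Rc x (a x) <= 1) by (apply Fr1_bounds; auto; lra).
    specialize (P_range x Hx); specialize (HGb _ HF).
    rewrite !Rabs_mult, (Rabs_pos_eq (P x)), (Rabs_pos_eq x) by lra.
    pose proof (Rabs_pos (G (Fr1 lam Rc x (a x)))).
    assert (P x * Rabs (G (Fr1 lam Rc x (a x))) <= 1) by nra.
    nra.
Qed.

Lemma RInt_weighted_Fr1_le lam1 lam2 : 0 <= lam1 <= lam2 ->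
  RInt (fun x => P x * Fr1 lam1 Rc x (a x) * x) 0 Rc <=
  RInt (fun x => P x * Fr1 lam2 Rc x (a x) * x) 0 Rc.
Proof.
  intros Hlam.
  apply RInt_le; [lra | | |].
  1,2: apply (ex_RInt_weighted_Fr1 (fun y => y)); [lra | apply continuous_id |].
  1,2: intros y Hy; rewrite Rabs_pos_eq; lra.
  intros x Hx.
  specialize (P_range x (proj1 Hx)).
  assert (Fr1 lam1 Rc x (a x) <= Fr1 lam2 Rc x (a x))
    by (apply Fr1_le_lam; [lra | lra | apply a_pos; lra]).
  apply Rmult_le_compat_r; [lra |]; apply Rmult_le_compat_l; lra.
Qed.

Lemma RInt_weighted_compl_Fr1_le lam1 lam2 : 0 <= lam1 <= lam2 ->
  RInt (fun x => P x * (1 - Fr1 lam2 Rc x (a x)) * x) 0 Rc <=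
  RInt (fun x => P x * (1 - Fr1 lam1 Rc x (a x)) * x) 0 Rc.
Proof.
  intros Hlam.
  apply RInt_le; [lra | | |].
  1,2: apply (ex_RInt_weighted_Fr1 (fun y => 1 - y)); [lra | |].
  1,3: intros y; apply (continuous_minus (V := R_NormedModule));
         [apply continuous_const | apply continuous_id].
  1,2: intros y Hy; rewrite Rabs_pos_eq; lra.
  intros x Hx.
  specialize (P_range x (proj1 Hx)).
  assert (Fr1 lam1 Rc x (a x) <= Fr1 lam2 Rc x (a x))
    by (apply Fr1_le_lam; [lra | lra | apply a_pos; lra]).
  apply Rmult_le_compat_r; [lra |]; apply Rmult_le_compat_l; lra.
Qed.

End Weighted_Fr1_integrals.

Lemma logistic_denom_pos C z : 0 < C -> 1 < 1 + C * exp z.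
Proof. intros HC; pose proof (exp_pos z); nra. Qed.

Lemma PL_range H B C x : 0 < C -> 0 <= PL H B C x <= 1.
Proof.
  intros HC; unfold PL.
  pose proof (logistic_denom_pos C (- B * (atan (H / x) - C)) HC).
  split; [apply Rle_div_r | apply Rle_div_l]; lra.
Qed.

Lemma PN_range H B C x : 0 < C -> 0 <= PN H B C x <= 1.
Proof. intros HC; pose proof (PL_range H B C x HC); unfold PN; lra. Qed.

Lemma continuous_PL H B C x : 0 < C -> 0 < x -> continuous (PL H B C) x.
Proof.
  intros HC Hx; apply (ex_derive_continuous (V := R_NormedModule)); unfold PL; auto_derive.
  pose proof (logistic_denom_pos C (- B * (atan (H * / x) + - C)) HC).
  repeat split; lra.
Qed.

Lemma continuous_PN H B C x : 0 < C -> 0 < x -> continuous (PN H B C) x.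
Proof.
  intros HC Hx; apply (continuous_minus (V := R_NormedModule) (fun _ => 1));
    [apply continuous_const | apply continuous_PL; assumption].
Qed.

Lemma continuous_threshold H k s e x : 0 < H -> 0 < k ->
  continuous (fun y => Rpower (k * Rpower (H ^ 2 + y ^ 2) s) e) x.
Proof.
  intros HH Hk; apply (ex_derive_continuous (V := R_NormedModule)); unfold Rpower; auto_derive.
  split; [nra | split; [| exact I]].
  apply Rmult_lt_0_compat; [exact Hk | apply exp_pos].
Qed.

Theorem corollary2 (Rc H alphaL alphaN B C delta : R) :
  0 < Rc -> 0 < H -> 0 < alphaL -> 0 < alphaN -> 0 < B -> 0 < C ->
  0 < delta < 1 ->
  forall lam1 lam2 : R, 0 < lam1 -> lam1 <= lam2 ->
    CA1 Rc H alphaL alphaN B C delta lam1 <= CA1 Rc H alphaL alphaN B C delta lam2 /\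
    CA3 Rc H alphaL alphaN B C delta lam2 <= CA3 Rc H alphaL alphaN B C delta lam1.
Proof.
  intros HRc HH _ _ _ HC Hdelta lam1 lam2 Hlam1 Hlam.
  assert (Hscale : 0 <= 2 / Rc ^ 2)
    by (apply Rlt_le, Rdiv_lt_0_compat; [lra | apply pow_lt, HRc]).
  assert (HAc : forall s x, continuous (Athr H alphaN delta s) x)
    by (intros; apply continuous_threshold; lra).
  assert (HBc : forall s x, continuous (Bthr H alphaN delta s) x)
    by (intros; apply continuous_threshold; [lra | apply Rinv_0_lt_compat; lra]).
  assert (HApos : forall s x, 0 < Athr H alphaN delta s x) by (intros; apply exp_pos).
  assert (HBpos : forall s x, 0 < Bthr H alphaN delta s x) by (intros; apply exp_pos).
  assert (Hlams : 0 <= lam1 <= lam2) by lra.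
  split; [unfold CA1 | unfold CA3]; apply Rmult_le_compat_l, Rplus_le_compat; try exact Hscale.
  - apply (RInt_weighted_Fr1_le Rc (PL H B C) (Athr H alphaN delta alphaL));
      auto using continuous_PL, PL_range.
  - apply (RInt_weighted_Fr1_le Rc (PN H B C) (Athr H alphaN delta alphaN));
      auto using continuous_PN, PN_range.
  - apply (RInt_weighted_compl_Fr1_le Rc (PL H B C) (Bthr H alphaN delta alphaL));
      auto using continuous_PL, PL_range.
  - apply (RInt_weighted_compl_Fr1_le Rc (PN H B C) (Bthr H alphaN delta alphaN));
      auto using continuous_PN, PN_range.
Qed.
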